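(* Consider the algorithm SCHEMATIC-ALGO$(G,\mu^*,m^*,\Delta^*,\gamma)$ described in the context, and let $V_{small}$, $E_{small}$ be the sets it defines at its final step. Then the graph $G_{small}:=(V_{small},E_{small})$ has maximum degree $O_\epsilon\left((\Delta^* )^\gamma\right)$.
   Context: Let $G=(V,E)$ be a graph with $n$ vertices, $m$ edges, average degree $d$; $\mu(G)$ is its maximum matching size. Fix a small constant $\epsilon\in(0,1)$ and $\beta:=1/\Theta(\epsilon^3)$. For $H\subseteq E$ and a pair $e=(u,v)$, $\deg_e(H):=\deg_u(H)+\deg_v(H)$. An edge $e$ is underfull w.r.t. $H$ if $\deg_e(H)<(1-\epsilon)\beta$ and overfull w.r.t. $H$ if $\deg_e(H)>\beta$. The parameters satisfy $\mu(G)/(2+\epsilon)\le\mu^*\le n$, $d\le\Delta^*\le n$, $m^*\ge m$, $0<\gamma<1$. SCHEMATIC-ALGO: set $H\leftarrow\emptyset$. Repeat rounds: in each round set Status $\leftarrow$ false; for $i=1,\dots,(100m^*\log n)/(\mu^*(\Delta^* )^\gamma)$, sample an edge $e\in E$ uniformly at random (independently, with repetition); if $e\in E\setminus H$ and $e$ is underfull w.r.t. $H$, then set Status $\leftarrow$ true, $H\leftarrow H\cup\{e\}$, and then while some edge of $H$ is overfull w.r.t. $H$, remove such an edge from $H$. If at the end of a round Status is false, stop the rounds (this is the last round). Then let $U$ be the set of edges of $E\setminus H$ underfull w.r.t. $H$, take any $V_{small}\subseteq V$ with $\{v:\deg_v(U)\le (1-\epsilon)(\Delta^* )^\gamma/\epsilon\}\subseteq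 V_{small}\subseteq\{v:\deg_v(U)\le(1+\epsilon)(\Delta^* )^\gamma/\epsilon\}$, let $E_{small}:=\{(u,v)\in H\cup U: u,v\in V_{small}\}$, and return $\mu(E_{small})$. $O_\epsilon(\cdot)$ hides factors depending only on $\epsilon$. *)

From HB Require Import structures.
From mathcomp Require Import all_boot all_order all_algebra.
From mathcomp Require Import reals exp.
Set Implicit Arguments. Unset Strict Implicit. Unset Printing Implicit Defensive.
Import Order.TTheory GRing.Theory Num.Theory.
Local Open Scope ring_scope.

(* A simple graph on the finite vertex type T is given by its edge set
   E : {set {set T}}, each edge being a 2-element vertex set {u,v}. *)
Definition simple_edges (T : finType) (E : {set {set T}}) : Prop :=
  forall e, e \in E -> #|e| = 2%N.

Definition vdeg (T : finType) (H : {set {set T}}) (v : T) : nat :=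
  #|[set e in H | v \in e]|.

Definition edeg (T : finType) (H : {set {set T}}) (e : {set T}) : nat :=
  (\sum_(x in e) vdeg H x)%N.

Definition underfull (R : realType) (eps beta : R) (T : finType)
    (H : {set {set T}}) (e : {set T}) : bool :=
  (edeg H e)%:R < (1 - eps) * beta.

Definition overfull (R : realType) (beta : R) (T : finType)
    (H : {set {set T}}) (e : {set T}) : bool :=
  beta < (edeg H e)%:R.

Definition is_matching (T : finType) (E M : {set {set T}}) : bool :=
  (M \subset E) &&
  [forall e1 in M, forall e2 in M, (e1 != e2) ==> [disjoint e1 & e2]].

Definition mu (T : finType) (E : {set {set T}}) : nat :=
  (\max_(M : {set {set T}} | is_matching E M) #|M|)%N.

(* "while some edge of H is overfull w.r.t. H, remove such an edge":
   cleanup H H' means H' is a possible result of this loop started from H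
   (any overfull edge may be chosen at each iteration). *)
Inductive cleanup (R : realType) (beta : R) (T : finType) :
    {set {set T}} -> {set {set T}} -> Prop :=
| cleanup_done (H : {set {set T}}) :
    (forall f, f \in H -> ~~ overfull beta H f) -> @cleanup R beta T H H
| cleanup_step (H : {set {set T}}) (f : {set T}) (H' : {set {set T}}) :
    f \in H -> overfull beta H f -> @cleanup R beta T (H :\ f) H' ->
    @cleanup R beta T H H'.

(* One round: processes the list s of sampled edges (in order), starting with
   H and Status = false; ends with H' and final Status b. *)
Inductive round (R : realType) (eps beta : R) (T : finType)
    (E : {set {set T}}) : {set {set T}} -> seq {set T} -> bool ->
    {set {set T}} -> bool -> Prop :=
| round_nil (H : {set {set T}}) (b : bool) : @round R eps beta T E H [::] b H b
| round_skip (H : {set {set T}}) (e : {set T}) (s : seq {set T}) (b : bool) (H' : {set {set T}}) (b' : bool) :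
    ~~ ((e \in E) && (e \notin H) && underfull eps beta H e) ->
    @round R eps beta T E H s b H' b' -> @round R eps beta T E H (e :: s) b H' b'
| round_insert (H : {set {set T}}) (e : {set T}) (s : seq {set T}) (b : bool) (H1 H' : {set {set T}}) (b' : bool) :
    e \in E -> e \notin H -> underfull eps beta H e ->
    @cleanup R beta T (e |: H) H1 ->
    @round R eps beta T E H1 s true H' b' -> @round R eps beta T E H (e :: s) b H' b'.

(* A sequence of rounds, each with exactly L samples drawn from E, run until
   a round ends with Status = false; the final value of H is returned. *)
Inductive rounds (R : realType) (eps beta : R) (T : finType)
    (E : {set {set T}}) (L : nat) : {set {set T}} -> {set {set T}} -> Prop :=
| rounds_last (H : {set {set T}}) (s : seq {set T}) (H' : {set {set T}}) :
    size s = L -> all (fun e => e \in E) s ->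
    @round R eps beta T E H s false H' false -> @rounds R eps beta T E L H H'
| rounds_more (H : {set {set T}}) (s : seq {set T}) (H1 H' : {set {set T}}) :
    size s = L -> all (fun e => e \in E) s ->
    @round R eps beta T E H s false H1 true -> @rounds R eps beta T E L H1 H' ->
    @rounds R eps beta T E L H H'.

Definition samples_per_round (R : realType) (n : nat) (mstar mustar Dstar gamma : R)
    : nat :=
  Num.truncn ((100 * mstar * ln (n%:R)) / (mustar * powR Dstar gamma)).

Definition schematic_final_H (R : realType) (eps beta : R) (T : finType)
    (E : {set {set T}}) (mustar mstar Dstar gamma : R) (H : {set {set T}}) : Prop :=
  rounds eps beta E
    (samples_per_round #|T| mstar mustar Dstar gamma) set0 H.

Definition underfull_rest (R : realType) (eps beta : R) (T : finType)
    (E H : {set {set T}}) : {set {set T}} :=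
  [set e in E :\: H | underfull eps beta H e].

Definition E_small (T : finType) (H U : {set {set T}}) (Vs : {set T})
    : {set {set T}} :=
  [set e in H :|: U | e \subset Vs].

(* Every run of the algorithm ends each insertion with the overfull-removal
   loop, so the final H has no overfull edge; since a vertex's H-degree is at
   most the edge degree of any H-edge through it, every vertex has H-degree at
   most beta. Every vertex of V_small has U-degree at most
   (1 + eps) Dstar^gamma / eps, and an edge of E_small at v lies in H or in U.
   Hence the degree in G_small is at most beta + (1 + eps) Dstar^gamma / eps,
   which is at most (beta + (1 + eps) / eps) Dstar^gamma because
   Dstar^gamma >= 1. *)
From HB Require Import structures.
From mathcomp Require Import all_boot all_order all_algebra.
From mathcomp Require Import reals exp.
Import Order.TTheory GRing.Theory Num.Theory.
Local Open Scope ring_scope.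
Set Implicit Arguments. Unset Strict Implicit.

Section Degrees.

Variable T : finType.
Implicit Types (H U A B : {set {set T}}) (e Vs : {set T}) (v : T).

Lemma vdeg_le_edeg H e v : v \in e -> (vdeg H v <= edeg H e)%N.
Proof. by move=> ve; rewrite /edeg (bigD1 v) //= leq_addr. Qed.

Lemma vdeg_setU A B v : (vdeg (A :|: B) v <= vdeg A v + vdeg B v)%N.
Proof.
rewrite /vdeg; apply: leq_trans (leq_card_setU _ _); apply: subset_leq_card.
by apply/subsetP => e; rewrite !inE andb_orl.
Qed.

Lemma vdeg_E_small_notin H U Vs v : v \notin Vs -> vdeg (E_small H U Vs) v = 0%N.
Proof.
move=> vNVs; apply/eqP; rewrite cards_eq0; apply/eqP/setP => e; rewrite !inE.
by apply/negP => /andP[/andP[_ /subsetP eVs] /eVs]; apply/negP.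
Qed.

Lemma vdeg_E_small H U Vs v :
  (vdeg (E_small H U Vs) v <= vdeg H v + vdeg U v)%N.
Proof.
apply: leq_trans (vdeg_setU H U v); apply: subset_leq_card.
by apply/subsetP => e; rewrite !inE => /andP[/andP[-> _] ->].
Qed.

End Degrees.

Section OverfullFree.

Variables (R : realType) (eps beta : R) (T : finType) (E : {set {set T}}).
Implicit Types (H : {set {set T}}).

Definition overfull_free H := forall f, f \in H -> ~~ overfull beta H f.

Lemma cleanup_overfull_free H H' : cleanup beta H H' -> overfull_free H'.
Proof. by elim. Qed.

Lemma round_overfull_free H s b H' b' :
  round eps beta E H s b H' b' -> overfull_free H -> overfull_free H'.
Proof.
by elim=> // {}H e {}s {}b H1 {}H' {}b' _ _ _ /cleanup_overfull_free H1ok _ IH _;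
  apply: IH.
Qed.

Lemma rounds_overfull_free L H H' :
  rounds eps beta E L H H' -> overfull_free H -> overfull_free H'.
Proof.
elim=> [{}H s {}H' _ _ /round_overfull_free //|].
by move=> {}H s H1 {}H' _ _ /round_overfull_free Hr _ IH /Hr.
Qed.

Lemma schematic_final_H_overfull_free mustar mstar Dstar gamma H :
  schematic_final_H eps beta E mustar mstar Dstar gamma H -> overfull_free H.
Proof. by move/rounds_overfull_free; apply => f; rewrite inE. Qed.

Lemma overfull_free_vdeg H v :
  0 <= beta -> overfull_free H -> (vdeg H v)%:R <= beta.
Proof.
move=> beta_ge0 Hok; case: (set_0Vmem [set e in H | v \in e]) => [H0|[e]].
  by rewrite /vdeg H0 cards0.
rewrite inE => /andP[eH ve]; have := Hok e eH; rewrite /overfull -leNgt.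
by apply: le_trans; rewrite ler_nat vdeg_le_edeg.
Qed.

End OverfullFree.

Lemma powR_ge1 (R : realType) (a r : R) : 1 <= a -> 0 <= r -> 1 <= powR a r.
Proof. by move=> a_ge1 r_ge0; rewrite -(powRr0 a) ler_powR. Qed.

Theorem lemma3p5 (R : realType) (eps beta : R) :
  0 < eps < 1 -> 0 < beta ->
  exists C : R, 0 < C /\
  forall (T : finType) (E : {set {set T}})
         (mustar mstar Dstar gamma : R)
         (H : {set {set T}}) (Vs : {set T}),
    simple_edges E ->
    (mu E)%:R / (2 + eps) <= mustar -> mustar <= #|T|%:R ->
    (2 * #|E|)%:R / #|T|%:R <= Dstar -> Dstar <= #|T|%:R ->
    1 <= Dstar ->
    #|E|%:R <= mstar ->
    0 < gamma < 1 ->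
    schematic_final_H eps beta E mustar mstar Dstar gamma H ->
    let U := underfull_rest eps beta E H in
    [set v | (vdeg U v)%:R <= (1 - eps) * powR Dstar gamma / eps] \subset Vs ->
    Vs \subset [set v | (vdeg U v)%:R <= (1 + eps) * powR Dstar gamma / eps] ->
    forall v : T, (vdeg (E_small H U Vs) v)%:R <= C * powR Dstar gamma.
Proof.
move=> /andP[eps_gt0 _] beta_gt0.
have C_gt0 : 0 < beta + (1 + eps) / eps by rewrite addr_gt0 ?divr_gt0 ?addr_gt0.
exists (beta + (1 + eps) / eps); split=> // T E mustar mstar Dstar gamma H Vs.
move=> _ _ _ _ _ Dstar_ge1 _ /andP[gamma_gt0 _] /schematic_final_H_overfull_free.
move=> Hok U _ VsU v; have p_ge1 := powR_ge1 Dstar_ge1 (ltW gamma_gt0).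
have p_gt0 : 0 < powR Dstar gamma by apply: lt_le_trans p_ge1.
have [vVs|vNVs] := boolP (v \in Vs); last first.
  by rewrite vdeg_E_small_notin // mulr_ge0 ?(ltW C_gt0) ?(ltW p_gt0).
have vdegU : (vdeg U v)%:R <= (1 + eps) / eps * powR Dstar gamma.
  by move/subsetP: VsU => /(_ v vVs); rewrite inE mulrAC.
have vdegH : (vdeg H v)%:R <= beta * powR Dstar gamma.
  apply: le_trans (overfull_free_vdeg v (ltW beta_gt0) Hok) _.
  by rewrite ler_peMr ?(ltW beta_gt0).
apply: le_trans (_ : (vdeg H v + vdeg U v)%:R <= _).
  by rewrite ler_nat vdeg_E_small.
by rewrite natrD mulrDl lerD.
Qed.
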